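(* Let $r$ be a constant integer, $f\in\mathscr{F}_r$ given through an $r$-decomposition $(V_i,f_i)_{i=1}^m$, and $k$ an integer with $r<k\le n-1$, and suppose $V$ is connected. Then the star exploration algorithm outputs a connected set $S\subseteq V$ with $|S|\le k$ that is an $O(k^{r-1})$-approximate solution of the $\underline{k}$SPM problem, i.e. $\max\{f(T):T\subseteq V,|T|\le k\}\le O(k^{r-1})\cdot f(S)$. Star exploration: for each $v\in V$, let $T^v$ be the output of the batch-greedy augmenting algorithm applied to $f^{\{v\}}$ on ground set $V\setminus\{v\}$ with parameters $r-1$ and $k-1$; let $L^v=\{u\in T^v: f^{\{v\}}(u\mid T^v\setminus\{u\})>0\}$, $S^v=L^v\cup\{v\}$; output a set $S^v$ maximizing $f(S^v)$.
   Context: $V$ is a finite set, $n=|V|$; $g(u\mid T)=g(T\cup\{u\})-g(T)$. Supermodular: $g(A)+g(B)\le g(A\cup B)+g(A\cap B)$; monotone: $g(B)\le g(A)$ for $B\subseteq A$. $\mathscr{F}_r$ is the family of nonnegative monotone supermodular $f:2^V\to\mathbb{R}_+$ admitting an $r$-decomposition: $V_1,\dots,V_m\subseteq V$ with $|V_i|\le r$ and nonnegative supermodular $f_i:2^{V_i}\to\mathbb{R}_+$ with $f(S)=\sum_i f_i(S\cap V_i)$. For nonempty $S\subseteq V$, $I_S=\{i:V_i\cap S\ne\emptyset\}$ and $f^S:2^{V\setminus S}\to\mathbb{R}$, $f^S(T)=\sum_{i\in I_S}\big(f_i((S\cup T)\cap V_i)-f_i(S\cap V_i)\big)$. The batch-greedy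 augmenting algorithm with function $g$ on ground set $U$ and integers $r',k'$: $T_0=\emptyset$, $t=\lfloor k'/r'\rfloor$; for $i=1,\dots,t$ choose an $r'$-subset $S_i$ of $U\setminus T_{i-1}$ maximizing $g(T_{i-1}\cup S_i)$, $T_i=T_{i-1}\cup S_i$; output any $k'$-subset of $U$ containing $T_t$. The underlying graph is $G=(V,E)$, $E=\bigcup_i\{uv:\{u,v\}\subseteq V_i,u\ne v\}$; a set $S$ is connected if $G[S]$ is connected; ''$V$ is connected'' means $G$ is connected. The $\underline{k}$SPM problem asks for $S\subseteq V$ with $|S|\le k$ maximizing $f(S)$ (no connectivity requirement). Constants in $O(\cdot)$ may depend on $r$. *)

From HB Require Import structures.
From mathcomp Require Import all_boot all_order all_algebra.
Set Implicit Arguments. Unset Strict Implicit. Unset Printing Implicit Defensive.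
Import Order.TTheory GRing.Theory Num.Theory.
Local Open Scope ring_scope.

Section Defs.
Variables (R : realFieldType) (T : finType).

Definition supermodular_on (W : {set T}) (g : {set T} -> R) : Prop :=
  forall A B : {set T}, A \subset W -> B \subset W ->
    g A + g B <= g (A :|: B) + g (A :&: B).

Definition nonneg_on (W : {set T}) (g : {set T} -> R) : Prop :=
  forall A : {set T}, A \subset W -> 0 <= g A.

Definition monotone (g : {set T} -> R) : Prop :=
  forall A B : {set T}, B \subset A -> g B <= g A.

(* An r-decomposition (V_i, f_i)_{i < m}; f_i is only evaluated on subsets of V_i *)
Definition is_r_decomposition (r m : nat) (Vs : 'I_m -> {set T})
    (fs : 'I_m -> {set T} -> R) : Prop :=
  forall i, (#|Vs i| <= r)%N /\ nonneg_on (Vs i) (fs i) /\ supermodular_on (Vs i) (fs i).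

Definition decomp_fun (m : nat) (Vs : 'I_m -> {set T}) (fs : 'I_m -> {set T} -> R)
    (S : {set T}) : R :=
  \sum_(i < m) fs i (S :&: Vs i).

Definition fsup (m : nat) (Vs : 'I_m -> {set T}) (fs : 'I_m -> {set T} -> R)
    (S X : {set T}) : R :=
  \sum_(i < m | Vs i :&: S != set0) (fs i ((S :|: X) :&: Vs i) - fs i (S :&: Vs i)).

(* X is a possible output of the batch-greedy augmenting algorithm with
   function g on ground set U and integers r', k' (all tie-breaking choices allowed) *)
Definition batch_greedy_output (g : {set T} -> R) (U : {set T}) (r' k' : nat)
    (X : {set T}) : Prop :=
  exists Ts : nat -> {set T},
    Ts 0%N = set0 /\
    (forall i, (i < k' %/ r')%N ->
       exists Si : {set T},
         [/\ Si \subset U :\: Ts i, #|Si| = r', Ts i.+1 = Ts i :|: Si &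
             forall S' : {set T}, S' \subset U :\: Ts i -> #|S'| = r' ->
               g (Ts i :|: S') <= g (Ts i :|: Si)]) /\
    [/\ X \subset U, #|X| = k' & Ts (k' %/ r')%N \subset X].

Definition adj (m : nat) (Vs : 'I_m -> {set T}) : rel T :=
  fun u v => (u != v) && [exists i, (u \in Vs i) && (v \in Vs i)].

Definition connected_set (m : nat) (Vs : 'I_m -> {set T}) (S : {set T}) : Prop :=
  forall x y, x \in S -> y \in S ->
    connect (fun a b => [&& adj Vs a b, a \in S & b \in S]) x y.

Definition star_set (m : nat) (Vs : 'I_m -> {set T}) (fs : 'I_m -> {set T} -> R)
    (v : T) (Tv : {set T}) : {set T} :=
  [set u in Tv | 0 < fsup Vs fs [set v] Tv - fsup Vs fs [set v] (Tv :\ u)] :|: [set v].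

Definition star_exploration_output (r k m : nat) (Vs : 'I_m -> {set T})
    (fs : 'I_m -> {set T} -> R) (S : {set T}) : Prop :=
  exists Tv : T -> {set T},
    (forall v, batch_greedy_output (fsup Vs fs [set v]) ([set: T] :\ v) r.-1 k.-1 (Tv v)) /\
    exists v0 : T,
      S = star_set Vs fs v0 (Tv v0) /\
      forall v, decomp_fun Vs fs (star_set Vs fs v (Tv v)) <=
                decomp_fun Vs fs (star_set Vs fs v0 (Tv v0)).

End Defs.

From HB Require Import structures.
From mathcomp Require Import all_boot all_order all_algebra.
From mathcomp Require Import lra zify ring.
Import Order.TTheory GRing.Theory Num.Theory.

Set Implicit Arguments. Unset Strict Implicit. Unset Printing Implicit Defensive.

(* Fix v and let f^{v} = fsup Vs fs [set v], P_v = sum_{i : v in V_i} f_i({v}) and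
   N_v = sum_{i : v in V_i} f_i(empty) ([vertex_value] and [vertex_offset] below), so that
   f^{v} >= -N_v.  Then f(X) <= f(empty) + sum_{v in X} (P_v + f^{v}(X \ v)), and since every
   piece containing v meets X \ v in fewer than r elements, f^{v}(X \ v) is at most the sum of
   f^{v}(Z) + N_v over the O(k^(r-1)) sets Z included in X \ v with |Z| < r.  Each of the
   t ~ k/(r-1) greedy batches beats every such Z disjoint from the current greedy set, so Z is
   charged either to the first batch meeting it or, when no batch meets it, to the average
   batch.  Only O(k^(r-2)) sets Z meet a given batch, hence
   f^{v}(X \ v) = O(k^(r-2)) (f^{v}(T_t) + t N_v), one factor k better than the naive count.
   By supermodularity, discarding the elements of T^v of nonpositive marginal value does not
   decrease f^{v}, so P_v + f^{v}(T_t) <= f(S^v) <= f(S); summing over the at most k vertices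
   of X gives the ratio O(k^(r-1)).  Finally S^v is a star centred at v in the underlying
   graph, hence connected. *)

Lemma card_bigcup_leq (T I : finType) (P : pred I) (F : I -> {set T}) :
  #|\bigcup_(i | P i) F i| <= \sum_(i | P i) #|F i|.
Proof.
elim/big_ind2: _ => // [|m A n A' leAm leA'n]; first by rewrite cards0.
exact: leq_trans (leq_card_setU A A').1 (leq_add leAm leA'n).
Qed.

Section SmallSubsets.
Variable T : finType.
Implicit Types (B Y Z W : {set T}) (K : {set {set T}}).

Lemma card_meeting_leq K B M :
    (forall u, #|[set Z in K | u \in Z]| <= M) ->
  #|[set Z in K | ~~ [disjoint Z & B]]| <= #|B| * M.
Proof.
move=> KuM; rewrite -sum_nat_const.
apply: (@leq_trans (\sum_(u in B) #|[set Z in K | u \in Z]|)); last exact: leq_sum.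
apply: leq_trans _ (card_bigcup_leq _ _).
apply/subset_leq_card/subsetP => Z; rewrite inE -setI_eq0 => /andP[KZ /set0Pn[u]].
by rewrite inE => /andP[Zu Bu]; apply/bigcupP; exists u; rewrite // inE KZ.
Qed.

Lemma extend_subset Z W n :
  Z \subset W -> #|Z| <= n -> n <= #|W| ->
  exists Q : {set T}, [/\ Z \subset Q, Q \subset W & #|Q| = n].
Proof.
move=> sZW; elim: n => [|n IHn].
  by rewrite leqn0 cards_eq0 => /eqP-> _; exists set0; rewrite subxx sub0set cards0.
rewrite leq_eqVlt => /orP[/eqP cardZ _ | ltZn lt_nW]; first by exists Z; rewrite subxx cardZ.
have [Q [sZQ sQW cardQ]] := IHn ltZn (ltnW lt_nW).
have [x] : exists x, x \in W :\: Q.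
  by apply/set0Pn; rewrite -card_gt0 cardsDS // cardQ subn_gt0.
rewrite inE => /andP[Qx Wx]; exists (x |: Q).
by rewrite cardsU1 Qx cardQ subUset sub1set Wx sQW (subset_trans sZQ (subsetUr _ _)).
Qed.

Definition small_subsets Y (s : nat) : {set {set T}} :=
  [set Z : {set T} | (Z \subset Y) && (#|Z| <= s)].

Lemma card_small_subsets Y s : #|small_subsets Y s| <= #|Y|.+1 ^ s.
Proof.
elim: s => [|s IHs].
  rewrite expn0 -(cards1 (set0 : {set T})); apply/subset_leq_card/subsetP => Z.
  by rewrite !inE leqn0 cards_eq0 andbC => /andP[].
have sub : small_subsets Y s.+1 \subset
           small_subsets Y s :|: [set x |: Z | x in Y, Z in small_subsets Y s].
  apply/subsetP => Z; rewrite !inE => /andP[sZY]; rewrite leq_eqVlt ltnS.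
  case/orP => [/eqP cardZ | ->]; last by rewrite sZY.
  have [x Zx] : exists x, x \in Z by apply/set0Pn; rewrite -card_gt0 cardZ.
  apply/orP; right; apply/imset2P; exists x (Z :\ x); rewrite ?setD1K //.
    exact: subsetP sZY x Zx.
  by rewrite inE (subset_trans (subsetDl _ _) sZY) /=; move: cardZ; rewrite (cardsD1 x Z) Zx; lia.
apply: leq_trans (subset_leq_card sub) _; apply: leq_trans (leq_card_setU _ _).1 _.
rewrite curry_imset2X expnS mulSn leq_add // (leq_trans (leq_imset_card _ _)) //.
by rewrite cardsX leq_mul2l IHs orbT.
Qed.

Lemma card_small_subsets_mem Y s u :
  #|[set Z in small_subsets Y s.+1 | u \in Z]| <= #|small_subsets Y s|.
Proof.
apply: leq_trans (leq_imset_card (fun Z => u |: Z) (small_subsets Y s)).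
apply/subset_leq_card/subsetP => Z; rewrite !inE => /andP[/andP[sZY cardZ] Zu].
apply/imsetP; exists (Z :\ u); last by rewrite setD1K.
by rewrite inE (subset_trans (subsetDl _ _) sZY) /=; move: cardZ; rewrite (cardsD1 u Z) Zu; lia.
Qed.

End SmallSubsets.

Section Stars.
Variables (T : finType) (m : nat) (Vs : 'I_m -> {set T}).

Lemma adjC : symmetric (adj Vs).
Proof.
move=> u v; rewrite /adj eq_sym; congr (_ && _).
by apply/existsP/existsP => -[i /andP[? ?]]; exists i; apply/andP.
Qed.

Lemma star_connected (S : {set T}) v : v \in S ->
  {in S, forall u, u != v -> adj Vs v u} -> connected_set Vs S.
Proof.
move=> Sv adjS; pose e a b := [&& adj Vs a b, a \in S & b \in S].
have to_v x : x \in S -> connect e x v /\ connect e v x.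
  move=> Sx; have [->|xv] := eqVneq x v; first by split; apply: connect0.
  have avx := adjS x Sx xv.
  by split; apply: connect1; rewrite /e Sx Sv ?avx // adjC avx.
by move=> x y Sx Sy; apply: connect_trans (to_v x Sx).1 (to_v y Sy).2.
Qed.

End Stars.

Lemma approx_ratio_bound r k t : 1 < r -> 0 < t <= k ->
  1 + k * (1 + 3 * r.-1 * k ^ r.-2) + 3 * r.-1 * k ^ r.-2 * (2 * t) * r <=
  6 * r ^ 2 * k ^ r.-1.
Proof.
case: r => [|[|s]] // _ /andP[t_gt0 tk] /=; rewrite (expnS k) -mulnn.
have : 0 < k ^ s by rewrite expn_gt0; lia.
move: (k ^ s) => P P_gt0.
have -> : 1 + k * (1 + 3 * s.+1 * P) + 3 * s.+1 * P * (2 * t) * s.+2 =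
          1 + k + 3 * s.+1 * (k * P) + 6 * s.+1 * s.+2 * (t * P) by ring.
have : 6 * s.+1 * s.+2 * (t * P) <= 6 * s.+1 * s.+2 * (k * P).
  by rewrite leq_mul2l leq_mul2r tk !orbT.
have : k <= k * P by rewrite leq_pmulr.
move: (k * P) (t * P) => Q tP; nia.
Qed.

Local Open Scope ring_scope.

Section Supermodular.
Variables (R : realFieldType) (T : finType) (g : {set T} -> R).
Hypothesis g_supermod : forall A B, g A + g B <= g (A :|: B) + g (A :&: B).
Implicit Types A B W X : {set T}.

Lemma supermod_disjoint A B :
  g set0 = 0 -> A :&: B = set0 -> g A + g B <= g (A :|: B).
Proof. by move=> g0 AB0; have := g_supermod A B; rewrite AB0 g0 addr0. Qed.

Lemma marginal_le W X u :
  W \subset X -> u \in W -> g W - g (W :\ u) <= g X - g (X :\ u).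
Proof.
move=> sWX Wu; have := g_supermod W (X :\ u).
have -> : W :&: (X :\ u) = W :\ u by rewrite setIDA (setIidPl sWX).
have -> : W :|: (X :\ u) = X.
  apply/setP => x; rewrite !inE; have := subsetP sWX x.
  by case: eqP => [->|_]; rewrite ?Wu ?orbT //; case: (x \in W) => // ->.
lra.
Qed.

Definition pos_marginals X := [set u in X | 0 < g X - g (X :\ u)].

Lemma le_pos_marginals W X : W \subset X -> g W <= g (W :&: pos_marginals X).
Proof.
move: {2}#|W| (leqnn #|W|) => n; elim: n W => [|n IHn] W cardW sWX.
  by move: cardW; rewrite leqn0 cards_eq0 => /eqP->; rewrite set0I.
have [sWP|/subsetPn[u Wu Pu]] := boolP (W \subset pos_marginals X).
  by rewrite (setIidPl sWP).
have nonpos : g X - g (X :\ u) <= 0 by move: Pu; rewrite inE (subsetP sWX) // -leNgt.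
have -> : W :&: pos_marginals X = (W :\ u) :&: pos_marginals X.
  apply/setP => x; rewrite !in_setI in_setD1.
  by case: eqP => [->|] //=; rewrite (negbTE Pu) andbF.
have cardWu : (#|W :\ u| <= n)%N by move: cardW; rewrite (cardsD1 u W) Wu.
have := IHn _ cardWu (subset_trans (subsetDl _ _) sWX); have := marginal_le sWX Wu.
lra.
Qed.

End Supermodular.

Section BatchGreedy.
Variables (R : realFieldType) (T : finType) (g : {set T} -> R) (N : R).
Variables (U : {set T}) (b t : nat) (Ts : nat -> {set T}).
Implicit Types (A Z : {set T}) (K : {set {set T}}).
Hypotheses (g_supermod : forall A B, g A + g B <= g (A :|: B) + g (A :&: B))
  (g_set0 : g set0 = 0) (g_ge : forall A, - N <= g A).
Hypotheses (Ts0 : Ts 0 = set0) (U_large : (t * b <= #|U|)%N).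
Hypothesis Ts_step : forall i, (i < t)%N -> exists Si : {set T},
  [/\ Si \subset U :\: Ts i, #|Si| = b, Ts i.+1 = Ts i :|: Si &
      forall S' : {set T}, S' \subset U :\: Ts i -> #|S'| = b ->
        g (Ts i :|: S') <= g (Ts i :|: Si)].

Local Notation batch j := (Ts j.+1 :\: Ts j).

Lemma greedy_batch j : (j < t)%N ->
  [/\ Ts j :|: batch j = Ts j.+1, Ts j :&: batch j = set0,
      batch j \subset U & #|batch j| = b].
Proof.
move=> jt; have [Si [sSi <- -> _]] := Ts_step jt.
move: sSi; rewrite subsetD disjoint_sym => /andP[sSiU dSi].
suff -> : (Ts j :|: Si) :\: Ts j = Si by rewrite (disjoint_setI0 dSi).
by rewrite setDUl setDv set0U; apply/setDidPl; rewrite disjoint_sym.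
Qed.

Lemma greedy_subset_card i : (i <= t)%N -> Ts i \subset U /\ #|Ts i| = (i * b)%N.
Proof.
elim: i => [_|i IHi it]; first by rewrite Ts0 sub0set cards0.
have [Tsplit TB0 sBU cardB] := greedy_batch it; have [sTU cardT] := IHi (ltnW it).
by rewrite -Tsplit subUset sTU sBU cardsU TB0 cards0 subn0 cardT cardB mulSn addnC.
Qed.

Lemma greedy_mono i j : (i <= j <= t)%N -> Ts i \subset Ts j.
Proof.
case/andP; elim: j => [|j IHj]; first by rewrite leqn0 => /eqP->.
rewrite leq_eqVlt ltnS => /orP[/eqP-> // | ij jt].
have [Tsplit _ _ _] := greedy_batch jt; rewrite -Tsplit.
exact: subset_trans (IHj ij (ltnW jt)) (subsetUl _ _).
Qed.

(* Shifted by [2 N]: one [N] makes every gain nonnegative, the other absorbs the [N] of the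
   charged quantities [g Z + N]. *)
Definition greedy_gain j := g (Ts j.+1) - g (Ts j) + N *+ 2.

Lemma N_ge0 : 0 <= N.
Proof. by have := g_ge set0; rewrite g_set0 oppr_le0. Qed.

Lemma greedy_gain_ge0 j : (j < t)%N -> 0 <= greedy_gain j.
Proof.
move=> jt; have [Tsplit TB0 _ _] := greedy_batch jt.
have := supermod_disjoint g_supermod g_set0 TB0; rewrite Tsplit.
have := g_ge (batch j); have := N_ge0; rewrite /greedy_gain; lra.
Qed.

Lemma sum_greedy_gain : \sum_(j < t) greedy_gain j = g (Ts t) + N *+ (2 * t).
Proof.
rewrite big_split /= sumr_const card_ord -mulrnA mulnC.
rewrite -(big_mkord xpredT (fun j => g (Ts j.+1) - g (Ts j))) telescope_sumr //.
by rewrite Ts0 g_set0 subr0.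
Qed.

Lemma sum_greedy_gain_ge0 : 0 <= g (Ts t) + N *+ (2 * t).
Proof. by rewrite -sum_greedy_gain sumr_ge0 // => j _; apply: greedy_gain_ge0. Qed.

Lemma greedy_gain_ub j Z : (j < t)%N -> Z \subset U :\: Ts j -> (#|Z| <= b)%N ->
  g Z + N <= greedy_gain j.
Proof.
move=> jt sZ cardZ; have [Si [sSi _ TSi Si_max]] := Ts_step jt.
have [sTU cardT] := greedy_subset_card (ltnW jt).
have cardUT : (b <= #|U :\: Ts j|)%N.
  by rewrite cardsDS // cardT; move: U_large; have : (j.+1 <= t)%N := jt; nia.
have [Q [sZQ sQ cardQ]] := extend_subset sZ cardZ cardUT.
have TQ0 : Ts j :&: Q = set0.
  by apply/disjoint_setI0; rewrite disjoint_sym; move: sQ; rewrite subsetD => /andP[].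
have := Si_max Q sQ cardQ; rewrite -TSi.
have := supermod_disjoint g_supermod g_set0 TQ0.
have ZQZ0 : Z :&: (Q :\: Z) = set0 by rewrite setDE setICA setICr setI0.
have QE : Z :|: (Q :\: Z) = Q by rewrite -{2}(setID Q Z) (setIidPr sZQ) setUC.
have := supermod_disjoint g_supermod g_set0 ZQZ0; rewrite QE.
have := g_ge (Q :\: Z); rewrite /greedy_gain; lra.
Qed.

Lemma greedy_disjoint_ub Z : Z \subset U -> (#|Z| <= b)%N -> [disjoint Z & Ts t] ->
  t%:R * (g Z + N) <= \sum_(j < t) greedy_gain j.
Proof.
move=> sZU cardZ dZT.
have -> : t%:R * (g Z + N) = \sum_(j < t) (g Z + N) by rewrite sumr_const card_ord mulr_natl.
apply: ler_sum => j _; apply: greedy_gain_ub cardZ => //.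
rewrite subsetD sZU (disjointWr _ dZT) // greedy_mono //.
by rewrite leqnn andbT ltnW.
Qed.

Lemma greedy_meet_ub Z : Z \subset U -> (#|Z| <= b)%N -> ~~ [disjoint Z & Ts t] ->
  g Z + N <= \sum_(j < t | ~~ [disjoint Z & batch j]) greedy_gain j.
Proof.
move=> sZU cardZ hitZ; have exP : exists n, ~~ [disjoint Z & Ts n] by exists t.
case: (ex_minnP exP) => -[|j]; first by rewrite Ts0 -setI_eq0 setI0 eqxx.
move=> hitZj1 minj; have jt : (j < t)%N := minj t hitZ.
have dZj : [disjoint Z & Ts j] by apply/negPn/negP => /minj; rewrite ltnn.
have [Tsplit _ _ _] := greedy_batch jt.
have hitB : ~~ [disjoint Z & batch j].
  apply: contra hitZj1 => dZB; rewrite -Tsplit -setI_eq0 setIUr.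
  by rewrite !disjoint_setI0 ?setU0.
apply: le_trans (greedy_gain_ub jt _ cardZ) _; first by rewrite subsetD sZU dZj.
rewrite (bigD1 (Ordinal jt)) //= lerDl.
by apply: sumr_ge0 => i _; apply: greedy_gain_ge0.
Qed.

Lemma sum_meeting_gains_le K M : (forall u, (#|[set Z in K | u \in Z]| <= M)%N) ->
  \sum_(Z in K) \sum_(j < t | ~~ [disjoint Z & batch j]) greedy_gain j <=
  (b * M)%:R * \sum_(j < t) greedy_gain j.
Proof.
move=> KuM; rewrite (exchange_big_dep xpredT) //= mulr_sumr; apply: ler_sum => j _.
rewrite (eq_bigl [in [set Z in K | ~~ [disjoint Z & batch j]]]) => [|Z]; last by rewrite inE.
have [_ _ _ cardB] := greedy_batch (ltn_ord j).
rewrite sumr_const -(mulr_natl (greedy_gain j)).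
apply: ler_wpM2r; first exact: greedy_gain_ge0.
by rewrite ler_nat -cardB card_meeting_leq.
Qed.

Lemma greedy_charging K M :
    (forall Z, Z \in K -> Z \subset U /\ (#|Z| <= b)%N) ->
    (forall u, (#|[set Z in K | u \in Z]| <= M)%N) ->
  t%:R * \sum_(Z in K) (g Z + N) <=
  (#|K| + t * b * M)%:R * \sum_(j < t) greedy_gain j.
Proof.
move=> Ksmall KuM; set G := \sum_(j < t) greedy_gain j.
have G_ge0 : 0 <= G by rewrite /G sum_greedy_gain sum_greedy_gain_ge0.
pose hits Z := \sum_(j < t | ~~ [disjoint Z & batch j]) greedy_gain j.
have charge Z : Z \in K -> t%:R * (g Z + N) <= G + t%:R * hits Z.
  case/Ksmall=> sZU cardZ.
  have hits_ge0 : 0 <= t%:R * hits Z.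
    by rewrite mulr_ge0 ?ler0n ?sumr_ge0 // => j _; apply: greedy_gain_ge0.
  have [dZ|hitZ] := boolP [disjoint Z & Ts t].
    by have := greedy_disjoint_ub sZU cardZ dZ; rewrite -/G; lra.
  have := ler_wpM2l (ler0n _ t) (greedy_meet_ub sZU cardZ hitZ); rewrite -/(hits Z); lra.
rewrite mulr_sumr; apply: le_trans (ler_sum _ charge) _.
rewrite big_split /= sumr_const -mulr_sumr.
have := ler_wpM2l (ler0n _ t) (sum_meeting_gains_le KuM); rewrite -/G.
rewrite natrD !natrM -mulr_natr; lra.
Qed.

End BatchGreedy.

Section Decomposition.
Variables (R : realFieldType) (T : finType) (m r : nat).
Variables (Vs : 'I_m -> {set T}) (fs : 'I_m -> {set T} -> R).
Hypothesis decVf : is_r_decomposition r Vs fs.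
Implicit Types (A B W X Y Z : {set T}) (i : 'I_m).
Local Notation f := (decomp_fun Vs fs).

Lemma fs_ge0 i A : A \subset Vs i -> 0 <= fs i A.
Proof. by case: (decVf i) => _ [+ _]; apply. Qed.

Lemma fs_supermod i A B : A \subset Vs i -> B \subset Vs i ->
  fs i A + fs i B <= fs i (A :|: B) + fs i (A :&: B).
Proof. by case: (decVf i) => _ [_]; apply. Qed.

Lemma card_Vs i : (#|Vs i| <= r)%N.
Proof. by case: (decVf i). Qed.

Lemma decomp_fun_ge0 X : 0 <= f X.
Proof. by apply: sumr_ge0 => i _; apply/fs_ge0/subsetIr. Qed.

Section Vertex.
Variable v : T.
Local Notation fsup1 := (fsup Vs fs [set v]).

Definition local_gain i X := fs i (([set v] :|: X) :&: Vs i) - fs i ([set v] :&: Vs i).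
Definition vertex_offset := \sum_(i | v \in Vs i) fs i set0.
Definition vertex_value := \sum_(i | v \in Vs i) fs i ([set v] :&: Vs i).

Lemma fsup1E X : fsup1 X = \sum_(i | v \in Vs i) local_gain i X.
Proof. by apply: eq_bigl => i; rewrite setI_eq0 disjoint_sym disjoints1 negbK. Qed.

Lemma local_gain_ge i X : - fs i set0 <= local_gain i X.
Proof.
have := fs_supermod (subsetIr [set v] (Vs i)) (subsetIr (X :\ v) (Vs i)).
have -> : [set v] :&: Vs i :|: (X :\ v) :&: Vs i = ([set v] :|: X) :&: Vs i.
  by apply/setP => x; rewrite !inE; case: (x == v); case: (x \in X); case: (x \in Vs i).
have -> : [set v] :&: Vs i :&: ((X :\ v) :&: Vs i) = set0.
  by apply/setP => x; rewrite !inE; case: (x == v); case: (x \in X); case: (x \in Vs i).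
have := fs_ge0 (subsetIr (X :\ v) (Vs i)); rewrite /local_gain; lra.
Qed.

Lemma local_gain_supermod i X Y :
  local_gain i X + local_gain i Y <= local_gain i (X :|: Y) + local_gain i (X :&: Y).
Proof.
have := fs_supermod (subsetIr ([set v] :|: X) (Vs i)) (subsetIr ([set v] :|: Y) (Vs i)).
have -> : ([set v] :|: X) :&: Vs i :|: ([set v] :|: Y) :&: Vs i =
          ([set v] :|: (X :|: Y)) :&: Vs i.
  by apply/setP => x; rewrite !inE; case: (x == v); case: (x \in X); case: (x \in Y);
    case: (x \in Vs i).
have -> : ([set v] :|: X) :&: Vs i :&: (([set v] :|: Y) :&: Vs i) =
          ([set v] :|: (X :&: Y)) :&: Vs i.
  by apply/setP => x; rewrite !inE; case: (x == v); case: (x \in X); case: (x \in Y);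
    case: (x \in Vs i).
rewrite /local_gain; lra.
Qed.

Lemma local_gain_setIr i X : local_gain i (X :&: Vs i) = local_gain i X.
Proof.
congr (fs i _ - _); apply/setP => x; rewrite !inE.
by case: (x == v); case: (x \in X); case: (x \in Vs i).
Qed.

Lemma vertex_value_ge0 : 0 <= vertex_value.
Proof. by apply: sumr_ge0 => i _; apply/fs_ge0/subsetIr. Qed.

Lemma fsup1_set0 : fsup1 set0 = 0.
Proof. by rewrite fsup1E big1 // => i _; rewrite /local_gain setU0 subrr. Qed.

Lemma fsup1_ge X : - vertex_offset <= fsup1 X.
Proof. by rewrite fsup1E -sumrN; apply: ler_sum => i _; apply: local_gain_ge. Qed.

Lemma fsup1_supermod X Y : fsup1 X + fsup1 Y <= fsup1 (X :|: Y) + fsup1 (X :&: Y).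
Proof.
by rewrite !fsup1E -!big_split; apply: ler_sum => i _; apply: local_gain_supermod.
Qed.

Lemma vertex_value_fsup1 W :
  vertex_value + fsup1 W = \sum_(i | v \in Vs i) fs i (([set v] :|: W) :&: Vs i).
Proof.
rewrite /vertex_value fsup1E -big_split /=; apply: eq_bigr => i _.
by rewrite /local_gain addrC subrK.
Qed.

Lemma vertex_value_fsup1_le W : vertex_value + fsup1 W <= f ([set v] :|: W).
Proof.
rewrite vertex_value_fsup1 /decomp_fun [X in _ <= X](bigID (fun i => v \in Vs i)) /= lerDl.
by apply: sumr_ge0 => i _; apply/fs_ge0/subsetIr.
Qed.

Lemma fsup1_setD1_nadj W u : ~~ adj Vs v u -> fsup1 (W :\ u) = fsup1 W.
Proof.
move=> nvu; rewrite !fsup1E; apply: eq_bigr => i Vv; congr (fs i _ - _).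
apply/setP => x; rewrite !inE; have [->|] := eqVneq x u; rewrite ?andbT //=.
have [uV|] := boolP (u \in Vs i); rewrite ?andbF //.
suff /eqP-> : u == v by rewrite eqxx.
apply: contraNT nvu => uv; rewrite /adj eq_sym uv /=.
by apply/existsP; exists i; rewrite Vv uV.
Qed.

Lemma fsup1_le_sum_small_subsets Y : v \notin Y ->
  fsup1 Y <= \sum_(Z in small_subsets Y r.-1) (fsup1 Z + vertex_offset).
Proof.
move=> vY; have small i : v \in Vs i -> Y :&: Vs i \in small_subsets Y r.-1.
  move=> Vv; rewrite inE subsetIl /=.
  have /subset_leq_card : Y :&: Vs i \subset Vs i :\ v.
    by apply/subsetP => x; rewrite !inE => /andP[xY ->]; rewrite andbT; apply: contraNneq vY => <-.
  by have := card_Vs i; have := cardsD1 v (Vs i); rewrite Vv; lia.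
rewrite fsup1E (partition_big _ _ small) /=; apply: ler_sum => Z _.
rewrite (eq_bigr (local_gain^~ Z)) => [|i /andP[_ /eqP <-]]; last by rewrite local_gain_setIr.
rewrite fsup1E [X in _ <= X + _](bigID (fun i => Y :&: Vs i == Z)) /= -addrA lerDl.
have : - \sum_(i | (v \in Vs i) && (Y :&: Vs i != Z)) fs i set0 <=
       \sum_(i | (v \in Vs i) && (Y :&: Vs i != Z)) local_gain i Z.
  by rewrite -sumrN; apply: ler_sum => i _; apply: local_gain_ge.
have : \sum_(i | (v \in Vs i) && (Y :&: Vs i != Z)) fs i set0 <= vertex_offset.
  rewrite /vertex_offset [X in _ <= X](bigID (fun i => Y :&: Vs i != Z)) /= lerDl.
  by apply: sumr_ge0 => i _; apply/fs_ge0/sub0set.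
lra.
Qed.

End Vertex.

Lemma sum_vertex_pieces (F : 'I_m -> R) X :
  \sum_(v in X) \sum_(i | v \in Vs i) F i = \sum_i F i *+ #|X :&: Vs i|.
Proof.
rewrite (exchange_big_dep xpredT) //=; apply: eq_bigr => i _.
by rewrite -sumr_const; apply: eq_bigl => v; rewrite inE.
Qed.

Lemma decomp_fun_le_sum X :
  f X <= f set0 + \sum_(v in X) (vertex_value v + fsup Vs fs [set v] (X :\ v)).
Proof.
rewrite (eq_bigr (fun v => \sum_(i | v \in Vs i) fs i (X :&: Vs i))) => [|v Xv]; last first.
  by rewrite vertex_value_fsup1 setD1K.
rewrite sum_vertex_pieces /decomp_fun -big_split /=; apply: ler_sum => i _; rewrite set0I.
have [/cards0_eq->|/prednK<-] := posnP #|X :&: Vs i|; first by rewrite cards0 addr0.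
have := fs_ge0 (sub0set (Vs i)); have := fs_ge0 (subsetIr X (Vs i)).
move=> /(mulrn_wge0 #|X :&: Vs i|.-1); rewrite mulrS; lra.
Qed.

Lemma sum_vertex_offset_le X : \sum_(v in X) vertex_offset v <= r%:R * f set0.
Proof.
rewrite /vertex_offset sum_vertex_pieces /decomp_fun mulr_sumr; apply: ler_sum => i _.
rewrite set0I -(mulr_natr (fs i set0)) mulrC; apply: ler_wpM2r; first exact/fs_ge0/sub0set.
by rewrite ler_nat; apply: leq_trans (subset_leq_card (subsetIr X (Vs i))) (card_Vs i).
Qed.

End Decomposition.

Section StarExploration.
Variables (R : realFieldType) (T : finType) (m r k : nat).
Variables (Vs : 'I_m -> {set T}) (fs : 'I_m -> {set T} -> R).
Local Notation f := (decomp_fun Vs fs).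
Local Notation fsup1 v := (fsup Vs fs [set v]).
Local Notation t := (k.-1 %/ r.-1)%N.
Local Notation c := (3 * r.-1 * k ^ r.-2)%N.
Implicit Types (v : T) (Tv W X Y : {set T}).

Lemma star_set_connected v Tv : connected_set Vs (star_set Vs fs v Tv).
Proof.
apply: (@star_connected _ _ _ _ v); first by rewrite !inE eqxx orbT.
move=> u; rewrite !inE => /orP[/andP[_ pos_u] uv | /eqP->]; last by rewrite eqxx.
by apply: contraTT pos_u => nvu; rewrite fsup1_setD1_nadj // subrr ltxx.
Qed.

Lemma card_star_set v Tv : (#|Tv| < k)%N -> (#|star_set Vs fs v Tv| <= k)%N.
Proof.
move=> cardTv; apply: leq_trans (leq_card_setU _ _).1 _; rewrite cards1 addn1.
by apply: leq_ltn_trans cardTv; apply/subset_leq_card/subsetP => u; rewrite inE => /andP[].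
Qed.

Hypotheses (decVf : is_r_decomposition r Vs fs) (f_mono : monotone f).
Hypotheses (r_gt1 : (1 < r)%N) (r_lt_k : (r < k)%N).

Lemma greedy_length_bounds :
  [/\ (0 < t <= k)%N, (t * r.-1 <= k.-1)%N & (k <= 2 * r.-1 * t)%N].
Proof.
have b_gt0 : (0 < r.-1)%N by lia.
have t_gt0 : (0 < t)%N by rewrite divn_gt0 //; lia.
have := ltn_ceil k.-1 b_gt0; have := leq_divM k.-1 r.-1.
move: t_gt0; move: (k.-1 %/ r.-1)%N => q q_gt0 qb_le lt_ceil.
by rewrite q_gt0 /=; split; nia.
Qed.

Lemma star_value_ge v Tv W : W \subset Tv ->
  vertex_value Vs fs v + fsup1 v W <= f (star_set Vs fs v Tv).
Proof.
move=> sWTv; set P := pos_marginals (fsup1 v) Tv.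
have := le_pos_marginals (fsup1_supermod decVf v) sWTv; rewrite -/P.
have := vertex_value_fsup1_le decVf v (W :&: P).
have : [set v] :|: W :&: P \subset star_set Vs fs v Tv.
  by rewrite subUset sub1set !inE eqxx orbT /= (subset_trans (subsetIr _ _) (subsetUl _ _)).
move/f_mono; lra.
Qed.

Lemma fsup1_le_greedy v Tv Y :
    batch_greedy_output (fsup1 v) ([set: T] :\ v) r.-1 k.-1 Tv ->
    Y \subset [set: T] :\ v -> (#|Y| < k)%N ->
  exists2 W : {set T}, W \subset Tv &
    fsup1 v Y <= c%:R * (fsup1 v W + vertex_offset Vs fs v *+ (2 * t)).
Proof.
case=> Ts [Ts0 [Ts_step [sTvU cardTv sTsTv]]] sYU cardY.
have [/andP[t_gt0 _] tb_le kb_le] := greedy_length_bounds.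
have U_large : (t * r.-1 <= #|[set: T] :\ v|)%N.
  by rewrite (leq_trans tb_le) // -cardTv subset_leq_card.
exists (Ts t) => //.
have vY : v \notin Y by apply/negP => /(subsetP sYU); rewrite !inE eqxx.
have b_gt0 : (0 < r.-1)%N by lia.
set K := small_subsets Y r.-1; set M := #|small_subsets Y r.-2|.
have Ksmall Z : Z \in K -> Z \subset [set: T] :\ v /\ (#|Z| <= r.-1)%N.
  by rewrite inE => /andP[sZY ->]; rewrite (subset_trans sZY sYU).
have KuM u : (#|[set Z in K | u \in Z]| <= M)%N.
  by have := card_small_subsets_mem Y r.-2 u; rewrite prednK.
have charge := greedy_charging (fsup1_supermod decVf v) (fsup1_set0 Vs fs v)
  (fsup1_ge decVf v) Ts0 U_large Ts_step Ksmall KuM.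
rewrite (sum_greedy_gain _ _ (fsup1_set0 Vs fs v) Ts0) in charge.
have count : (#|K| + t * r.-1 * M <= t * c)%N.
  have expYk e : (#|Y|.+1 ^ e <= k ^ e)%N by elim: e => // e IHe; rewrite !expnS leq_mul.
  have cardK : (#|K| <= k * k ^ r.-2)%N.
    by rewrite -expnS prednK // (leq_trans (card_small_subsets _ _)) ?expYk.
  have cardM : (M <= k ^ r.-2)%N := leq_trans (card_small_subsets _ _) (expYk _).
  have : (k * k ^ r.-2 <= 2 * r.-1 * t * k ^ r.-2)%N by rewrite leq_mul2r kb_le orbT.
  have : (t * r.-1 * M <= t * r.-1 * k ^ r.-2)%N by rewrite leq_mul2l cardM orbT.
  nia.
apply: le_trans (fsup1_le_sum_small_subsets decVf vY) _.
rewrite -(ler_pM2l (_ : 0 < t%:R)) ?ltr0n //; apply: le_trans charge _.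
rewrite mulrA -natrM ler_wpM2r ?ler_nat //.
exact: sum_greedy_gain_ge0 (fsup1_supermod decVf v) (fsup1_set0 Vs fs v)
  (fsup1_ge decVf v) Ts0 Ts_step.
Qed.

Lemma star_bound v Tv X :
    batch_greedy_output (fsup1 v) ([set: T] :\ v) r.-1 k.-1 Tv ->
    v \in X -> (#|X| <= k)%N ->
  vertex_value Vs fs v + fsup1 v (X :\ v) <=
  (1 + c)%:R * f (star_set Vs fs v Tv) + (c * (2 * t))%:R * vertex_offset Vs fs v.
Proof.
move=> greedy Xv cardX.
have sXU : X :\ v \subset [set: T] :\ v by apply: setSD (subsetT X).
have cardXv : (#|X :\ v| < k)%N by move: cardX; rewrite (cardsD1 v X) Xv.
have [W sWTv fsup_le] := fsup1_le_greedy greedy sXU cardXv.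
have value_le := star_value_ge v sWTv.
have := star_value_ge v (sub0set Tv); rewrite fsup1_set0 addr0 => value0_le.
have value_ge0 := vertex_value_ge0 decVf v; set F := f _ in value_le value0_le *.
have : c%:R * fsup1 v W <= c%:R * F by apply: ler_wpM2l; [rewrite ler0n | lra].
move: fsup_le; rewrite natrD natrM -mulr_natr; lra.
Qed.

Lemma star_exploration_approx (Tv : T -> {set T}) v0 X :
    (forall v, batch_greedy_output (fsup1 v) ([set: T] :\ v) r.-1 k.-1 (Tv v)) ->
    (forall v, f (star_set Vs fs v (Tv v)) <= f (star_set Vs fs v0 (Tv v0))) ->
    (#|X| <= k)%N ->
  f X <= (6 * r ^ 2)%:R * (k ^ r.-1)%:R * f (star_set Vs fs v0 (Tv v0)).
Proof.
move=> greedy maxS cardX; set F := f (star_set Vs fs v0 (Tv v0)).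
have F0 : f set0 <= F := f_mono (sub0set _).
have F_ge0 : 0 <= F := decomp_fun_ge0 decVf _.
have per_v v : v \in X -> vertex_value Vs fs v + fsup1 v (X :\ v) <=
    (1 + c)%:R * F + (c * (2 * t))%:R * vertex_offset Vs fs v.
  move=> Xv; apply: le_trans (star_bound (greedy v) Xv cardX) _.
  by rewrite lerD2r ler_wpM2l ?ler0n.
apply: le_trans (decomp_fun_le_sum decVf X) _.
apply: le_trans (lerD F0 (ler_sum _ per_v)) _.
rewrite big_split /= sumr_const -mulr_sumr.
have offset_le : (c * (2 * t))%:R * \sum_(v in X) vertex_offset Vs fs v <=
                 (c * (2 * t) * r)%:R * F.
  rewrite [X in _ <= X * _]natrM -mulrA; apply: ler_wpM2l; first exact: ler0n.
  by apply: le_trans (sum_vertex_offset_le decVf X) _; apply: ler_wpM2l.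
have value_le : ((1 + c)%:R * F) *+ #|X| <= (k * (1 + c))%:R * F.
  rewrite -(mulr_natl ((1 + c)%:R * F)) mulrA -natrM; apply: ler_wpM2r => //.
  by rewrite ler_nat leq_mul2r cardX orbT.
have count : (1 + k * (1 + c) + c * (2 * t) * r <= 6 * r ^ 2 * k ^ r.-1)%N.
  by have [tk _ _] := greedy_length_bounds; apply: approx_ratio_bound.
rewrite -(ler_nat R) 2!natrD in count; have := ler_wpM2r F_ge0 count.
rewrite -natrM; lra.
Qed.

End StarExploration.

Theorem corollary1 (r : nat) (r_gt1 : (1 < r)%N) :
  exists C : nat,
  forall (R : realFieldType) (T : finType) (m : nat)
         (Vs : 'I_m -> {set T}) (fs : 'I_m -> {set T} -> R) (k : nat),
    is_r_decomposition r Vs fs ->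
    monotone (decomp_fun Vs fs) ->
    (r < k)%N -> (k <= #|T| - 1)%N ->
    connected_set Vs [set: T] ->
    forall S : {set T}, star_exploration_output r k Vs fs S ->
      [/\ connected_set Vs S, (#|S| <= k)%N &
          forall X : {set T}, (#|X| <= k)%N ->
            decomp_fun Vs fs X <= C%:R * (k ^ r.-1)%:R * decomp_fun Vs fs S].
Proof.
exists (6 * r ^ 2)%N.
move=> R T m Vs fs k decVf f_mono r_lt_k _ _ S [Tv [greedy [v0 [-> maxS]]]].
split.
- exact: star_set_connected.
- have [_ [_ [_ [_ cardTv _]]]] := greedy v0.
  by apply: card_star_set; lia.
- by move=> X; apply: star_exploration_approx.
Qed.
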